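(* Let $p\neq2$ be a prime and let $a_2,a_3,b_2,b_3$ be nonzero elements of the field $\mathbb{Z}(p)$ of integers modulo $p$ with $a_2b_3=a_3b_2$. Then there exist independent $\mathbb{Z}(p)$-valued random variables $\xi_1,\xi_2,\xi_3,\xi_4$ with nowhere-vanishing characteristic functions, with $\xi_2$ and $\xi_3$ identically distributed, and independent $\mathbb{Z}(p)$-valued random variables $\eta_1,\eta_2,\eta_3,\eta_4$ with nowhere-vanishing characteristic functions, with $\eta_2$ and $\eta_3$ identically distributed, such that $(\xi_1+a_2\xi_2+a_3\xi_3,\ b_2\xi_2+b_3\xi_3+\xi_4)$ and $(\eta_1+a_2\eta_2+a_3\eta_3,\ b_2\eta_2+b_3\eta_3+\eta_4)$ have the same distribution, but the distribution of $\eta_2$ is not equal to the distribution of $\xi_2+\alpha$ for any $\alpha\in\mathbb{Z}(p)$.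
   Context: The character group of the additive group of $\mathbb{Z}(p)$ is isomorphic to $\mathbb{Z}(p)$; write $(x,y)$ for the value of the character $y$ at $x$. The characteristic function of a $\mathbb{Z}(p)$-valued random variable $\xi$ is $y\mapsto\mathbf{E}[(\xi,y)]$ on the character group; ''nowhere-vanishing'' means it is nonzero at every $y$. *)

From HB Require Import structures.
From mathcomp Require Import all_boot all_order all_algebra.
From mathcomp Require Import reals trigo complex.
Set Implicit Arguments. Unset Strict Implicit. Unset Printing Implicit Defensive.
Import Order.TTheory GRing.Theory Num.Theory.
Local Open Scope ring_scope.

Section FinProb.
Variables (R : realType) (Omega : finType).

Definition is_prob (P : Omega -> R) : Prop :=
  (forall w, 0 <= P w) /\ \sum_(w : Omega) P w = 1.

Definition prob (P : Omega -> R) (A : pred Omega) : R := \sum_(w | A w) P w.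

Definition law (p : nat) (P : Omega -> R) (X : Omega -> 'F_p) (a : 'F_p) : R :=
  prob P (fun w => X w == a).

Definition indep (p n : nat) (P : Omega -> R) (X : 'I_n -> Omega -> 'F_p) : Prop :=
  forall (S : {set 'I_n}) (a : 'I_n -> 'F_p),
    prob P (fun w => [forall i in S, X i w == a i])
    = \prod_(i in S) prob P (fun w => X i w == a i).

Definition fam4 (p : nat) (X1 X2 X3 X4 : Omega -> 'F_p) : 'I_4 -> Omega -> 'F_p :=
  fun i => match val i with 0 => X1 | 1 => X2 | 2 => X3 | _ => X4 end.

Definition indep4 (p : nat) (P : Omega -> R) (X1 X2 X3 X4 : Omega -> 'F_p) : Prop :=
  indep P (fam4 X1 X2 X3 X4).

(* the character pairing (x, y) = exp(2 pi i x y / p) of Z(p) with its dual Z(p) *)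
Definition zchar (p : nat) (x y : 'F_p) : R[i] :=
  let t := (2 * pi * ((x : nat) * (y : nat))%:R / p%:R)%R in
  (cos t +i* sin t)%C.

Definition charfun (p : nat) (P : Omega -> R) (X : Omega -> 'F_p) (y : 'F_p) : R[i] :=
  \sum_(w : Omega) ((P w)%:C * zchar (X w) y)%C.

Definition charfun_nonvanishing (p : nat) (P : Omega -> R) (X : Omega -> 'F_p) : Prop :=
  forall y : 'F_p, charfun P X y != 0.

End FinProb.

(* Let xi2, xi3 be independent with law mu = (1 + delta_0 - delta_1) / p, let eta2 = 1 - xi2,
   eta3 = 1 - xi3, whose law is the reflection (1 - delta_0 + delta_1) / p of mu, and let all
   other variables be 0.  Off the origin both characteristic functions equal
   +-(1 - zeta ^ y) / p with zeta a primitive p-th root of unity, so they do not vanish.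
   Since a2 b3 = a3 b2, both linear forms are functions of s = x2 + (a3 / a2) x3.  The joint
   densities of (xi2, xi3) and (eta2, eta3) differ by 2 (d x2 + d x3) / p ^ 2 with
   d = delta_0 - delta_1, and d sums to zero along every line s = const, so s has the same law
   in both cases.  Finally the reflected law vanishes at 0 and peaks at 1, whereas mu shifted by
   alpha vanishes at alpha + 1 and peaks at alpha, which forces -1 = 1, impossible for p <> 2. *)

From mathcomp Require Import all_boot all_order all_algebra.
From mathcomp Require Import reals trigo complex.
From mathcomp Require Import ring lra.
Set Implicit Arguments.
Unset Strict Implicit.
Unset Printing Implicit Defensive.
Import Order.TTheory GRing.Theory Num.Theory.
Local Open Scope ring_scope.
Local Open Scope complex_scope.

Section FinProbTheory.
Variables (R : realType) (Omega : finType) (P : Omega -> R).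

Lemma eq_prob (A B : pred Omega) : A =1 B -> prob P A = prob P B.
Proof. by move=> eqAB; apply: eq_bigl. Qed.

Lemma prob_andb_cst (b : bool) (A : pred Omega) :
  prob P (fun w => b && A w) = b%:R * prob P A.
Proof. by case: b; rewrite ?mul1r ?mul0r //; exact: big_pred0. Qed.

Lemma prob_cst (b : bool) : is_prob P -> prob P (fun _ => b) = b%:R.
Proof.
by case=> _ sumP1; case: b; [exact: sumP1 | exact: big_pred0].
Qed.

Lemma prob_pred1 (a : Omega) : prob P (fun w => w == a) = P a.
Proof. exact: big_pred1_eq. Qed.

Lemma law_can (p : nat) (X : Omega -> 'F_p) (f g : 'F_p -> 'F_p) (a : 'F_p) :
  cancel f g -> cancel g f -> law P (fun w => f (X w)) a = law P X (g a).
Proof. by move=> fK gK; apply: eq_prob => w; rewrite (can2_eq fK gK). Qed.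

Lemma indep_of_events (p n : nat) (X : 'I_n -> Omega -> 'F_p) : is_prob P ->
  (forall A : 'I_n -> pred 'F_p,
     prob P (fun w => [forall i, A i (X i w)]) = \prod_i prob P (fun w => A i (X i w))) ->
  indep P X.
Proof.
move=> probP prodA S a.
pose A i : pred 'F_p := if i \in S then pred1 (a i) else predT.
have -> : prob P (fun w => [forall i in S, X i w == a i])
          = prob P (fun w => [forall i, A i (X i w)]).
  by apply: eq_prob => w; apply: eq_forallb => i; rewrite /A; case: (i \in S).
rewrite prodA [RHS]big_mkcond; apply: eq_bigr => i _.
by rewrite /A; case: (i \in S) => //; apply: prob_cst.
Qed.

Lemma charfun_law (p : nat) (X : Omega -> 'F_p) (y : 'F_p) :
  charfun P X y = \sum_a (law P X a)%:C * zchar R a y.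
Proof.
rewrite /charfun (partition_big X xpredT) //; apply: eq_bigr => a _.
rewrite /law /prob rmorph_sum big_distrl /=.
by apply: eq_bigr => w /eqP ->.
Qed.

End FinProbTheory.

Lemma eq_charfun (R : realType) (p : nat) (Omega1 Omega2 : finType)
    (P1 : Omega1 -> R) (P2 : Omega2 -> R) (X1 : Omega1 -> 'F_p) (X2 : Omega2 -> 'F_p) :
  (forall a, law P1 X1 a = law P2 X2 a) -> charfun P1 X1 =1 charfun P2 X2.
Proof. by move=> eq_law y; rewrite !charfun_law; under eq_bigr do rewrite eq_law. Qed.

Section ProductSpace.
Variables (R : realType) (T1 T2 : finType) (mu1 : T1 -> R) (mu2 : T2 -> R).

Definition prod_mass (w : T1 * T2) : R := mu1 w.1 * mu2 w.2.

Lemma prob_prod (A : pred T1) (B : pred T2) :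
  prob prod_mass (fun w => A w.1 && B w.2) = prob mu1 A * prob mu2 B.
Proof. by rewrite /prob big_distrlr pair_big_dep. Qed.

Hypotheses (mu1_prob : is_prob mu1) (mu2_prob : is_prob mu2).

Lemma is_prob_prod : is_prob prod_mass.
Proof.
split; first by move=> w; apply: mulr_ge0; [apply: mu1_prob.1 | apply: mu2_prob.1].
by have := prob_prod predT predT; rewrite /prob /= => ->; rewrite mu1_prob.2 mu2_prob.2 mulr1.
Qed.

Lemma prob_fst (A : pred T1) : prob prod_mass (fun w => A w.1) = prob mu1 A.
Proof.
have := prob_prod A (fun _ => true); rewrite prob_cst // mulr1 => <-.
by apply: eq_prob => w; rewrite andbT.
Qed.

Lemma prob_snd (B : pred T2) : prob prod_mass (fun w => B w.2) = prob mu2 B.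
Proof. by have := prob_prod (fun _ => true) B; rewrite prob_cst // mul1r. Qed.

Lemma law_fst (p : nat) (f : T1 -> 'F_p) a :
  law prod_mass (fun w => f w.1) a = law mu1 f a.
Proof. exact: prob_fst. Qed.

Lemma law_snd (p : nat) (g : T2 -> 'F_p) a :
  law prod_mass (fun w => g w.2) a = law mu2 g a.
Proof. exact: prob_snd. Qed.

Lemma charfun_nonvanishing_fst (p : nat) (f : T1 -> 'F_p) :
  charfun_nonvanishing mu1 f -> charfun_nonvanishing prod_mass (fun w => f w.1).
Proof. by move=> nv_f y; rewrite (eq_charfun (law_fst f)). Qed.

Lemma charfun_nonvanishing_snd (p : nat) (g : T2 -> 'F_p) :
  charfun_nonvanishing mu2 g -> charfun_nonvanishing prod_mass (fun w => g w.2).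
Proof. by move=> nv_g y; rewrite (eq_charfun (law_snd g)). Qed.

Lemma indep4_prod (p : nat) (c0 c3 : 'F_p) (f : T1 -> 'F_p) (g : T2 -> 'F_p) :
  indep4 prod_mass (fun _ => c0) (fun w => f w.1) (fun w => g w.2) (fun _ => c3).
Proof.
apply: indep_of_events is_prob_prod _ => A.
rewrite !big_ord_recl big_ord0 mulr1 /fam4 /=.
set i1 : 'I_4 := lift ord0 ord0; set i2 : 'I_4 := lift ord0 (lift ord0 ord0).
set i3 : 'I_4 := lift ord0 (lift ord0 (lift ord0 ord0)).
rewrite !(prob_cst _ is_prob_prod).
rewrite [prob _ (fun w => A i1 _)](prob_fst (fun x => A i1 (f x))).
rewrite [prob _ (fun w => A i2 _)](prob_snd (fun y => A i2 (g y))).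
rewrite (@eq_prob _ _ _ _ (fun w => (A ord0 c0 && A i1 (f w.1)) && (A i3 c3 && A i2 (g w.2)))).
  rewrite (prob_prod (fun x => A ord0 c0 && A i1 (f x)) (fun y => A i3 c3 && A i2 (g y))).
  by rewrite !prob_andb_cst !mulrA mulrAC.
by move=> w; rewrite -(big_andE xpredT) !big_ord_recl big_ord0 andbT andbA [X in _ && X]andbC.
Qed.

End ProductSpace.

Lemma sum_fiber_eq0 (T : finType) (V : zmodType) (d : T -> V) (E : pred T)
    (h : T -> T -> T) :
  (forall x, injective (h x)) -> \sum_x d x = 0 ->
  \sum_(w : T * T | E (h w.1 w.2)) d w.1 = 0.
Proof.
move=> h_inj sum_d0.
rewrite -(pair_big_dep xpredT (fun x y => E (h x y)) (fun x _ => d x)) /=.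
rewrite (eq_bigr (fun x => \sum_(s | E s) d x)) => [|x _]; last first.
  by rewrite [RHS](reindex_inj (h_inj x)).
by rewrite exchange_big big1 // => s _; rewrite sum_d0.
Qed.

Section Fp.
Variables (R : realType) (p : nat).
Hypothesis p_prime : prime p.

Definition zeta (n : nat) : R[i] :=
  cos (2 * pi * n%:R / p%:R) +i* sin (2 * pi * n%:R / p%:R).

Lemma zcharE (x y : 'F_p) : zchar R x y = zeta (x * y). Proof. by []. Qed.

Let p_gt0 : (0 < p)%N. Proof. exact: prime_gt0. Qed.
Let natr_p_neq0 : (p%:R : R) != 0. Proof. by rewrite pnatr_eq0 -lt0n. Qed.

Lemma zeta0 : zeta 0 = 1.
Proof. by rewrite /zeta mulr0 mul0r cos0 sin0. Qed.

Lemma zetaD m n : zeta (m + n) = zeta m * zeta n.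
Proof.
rewrite /zeta natrD mulrDr mulrDl cosD sinD.
by apply/eqP; rewrite eq_complex /=; apply/andP; split; apply/eqP; ring.
Qed.

Lemma zetaDp n : zeta (n + p) = zeta n.
Proof.
rewrite /zeta.
have -> : 2 * pi * (n + p)%:R / p%:R = 2 * pi * n%:R / p%:R + pi *+ 2 :> R.
  by rewrite natrD mulrDr mulrDl mulfK // mulr_natl.
by rewrite cosD2pi sinD2pi.
Qed.

Lemma zeta_modp n : zeta (n %% p) = zeta n.
Proof.
rewrite [in RHS](divn_eq n p) addnC.
by elim: (n %/ p)%N => [|k IHk]; rewrite ?mul0n ?addn0 // mulSn addnCA addnC zetaDp.
Qed.

Lemma zeta_neq1 n : (0 < n < p)%N -> zeta n != 1.
Proof.
case/andP=> n_gt0 n_ltp; apply/negP => /eqP /(congr1 (@complex.Re R)) /=.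
pose t : R := pi * n%:R / p%:R.
have -> : 2 * pi * n%:R / p%:R = t *+ 2 by rewrite /t mulr2n; ring.
rewrite cos_mulr2n cos2sin2 => cos2t1.
have sin_t_gt0 : 0 < sin t.
  apply: sin_gt0_pi; rewrite /t !mulr_gt0 ?pi_gt0 ?invr_gt0 ?ltr0n //=.
  by rewrite -mulrA gtr_pMr ?pi_gt0 // ltr_pdivrMr ?ltr0n // mul1r ltr_nat.
have : sin t ^+ 2 = 0 by move: cos2t1; rewrite mulr2n; lra.
by move/eqP; rewrite expf_eq0 /= gt_eqF.
Qed.

Lemma zchar0 (y : 'F_p) : zchar R 0 y = 1.
Proof. by rewrite zcharE mul0n zeta0. Qed.

Lemma zchar1 (y : 'F_p) : zchar R 1 y = zeta y.
Proof. by rewrite zcharE /= modn_small ?mul1n // Fp_cast. Qed.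

Lemma zcharDl (x x' y : 'F_p) : zchar R (x + x') y = zchar R x y * zchar R x' y.
Proof.
by rewrite !zcharE /= {3}(Fp_cast p_prime) -zeta_modp modnMml zeta_modp mulnDl zetaD.
Qed.

Lemma zchar1_neq1 (y : 'F_p) : y != 0 -> zchar R 1 y != 1.
Proof.
move=> y_neq0; rewrite zchar1 zeta_neq1 // lt0n.
have := ltn_ord y; rewrite {2}(Fp_cast p_prime) => ->.
by rewrite andbT; apply: contra y_neq0 => /eqP y0; apply/eqP/val_inj.
Qed.

Lemma sum_zchar (y : 'F_p) : \sum_x zchar R x y = if y == 0 then p%:R else 0.
Proof.
have [->|y_neq0] := eqVneq y 0.
  by under eq_bigr do rewrite zcharE muln0 zeta0; rewrite sumr_const card_Fp.
set S := \sum_x _.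
have S_fix : S = S * zchar R 1 y.
  rewrite /S big_distrl [LHS](reindex_inj (addIr 1)) /=.
  by apply: eq_bigr => x _; rewrite zcharDl.
have : S * (1 - zchar R 1 y) == 0 by rewrite mulrBr mulr1 -S_fix subrr.
by rewrite mulf_eq0 subr_eq0 [1 == _]eq_sym (negbTE (zchar1_neq1 y_neq0)) orbF => /eqP.
Qed.

Lemma charfun_cst0 (Omega : finType) (P : Omega -> R) (y : 'F_p) :
  is_prob P -> charfun P (fun _ => 0) y = 1.
Proof.
case=> _ sumP1; rewrite /charfun; under eq_bigr do rewrite zchar0 mulr1.
by rewrite -rmorph_sum sumP1.
Qed.

Lemma Fp_oppr1_neq1 : p != 2%N -> (-1 : 'F_p) != 1.
Proof.
apply: contra => /eqP N1_eq1.
have two_eq0 : (2%:R : 'F_p) == 0 by rewrite mulr2n -[X in _ + X]N1_eq1 subrr.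
by rewrite -(dvdn_prime2 p_prime) // (dvdn_pcharf (pchar_Fp p_prime)).
Qed.

Definition delta01 (x : 'F_p) : R := (x == 0)%:R - (x == 1)%:R.

Definition mass (e : R) (x : 'F_p) : R := (1 + e * delta01 x) / p%:R.

Let F01 : (0 : 'F_p) != 1. Proof. by rewrite eq_sym oner_neq0. Qed.

Lemma sum_delta01_mul (V : pzRingType) (f : {rmorphism R -> V}) (z : 'F_p -> V) :
  \sum_x f (delta01 x) * z x = z 0 - z 1.
Proof.
have sum_pick a : \sum_x f (x == a)%:R * z x = z a.
  rewrite (bigD1 a) //= eqxx rmorph1 mul1r big1 ?addr0 // => x /negbTE ->.
  by rewrite rmorph0 mul0r.
by under eq_bigr do rewrite rmorphB mulrBl; rewrite sumrB !sum_pick.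
Qed.

Lemma sum_delta01 : \sum_x delta01 x = 0.
Proof.
have := sum_delta01_mul idfun (fun _ => 1 : R).
by under eq_bigr do rewrite mulr1; rewrite subrr.
Qed.

Lemma delta01_reflect x : delta01 (1 - x) = - delta01 x.
Proof.
rewrite /delta01.
have -> : (1 - x == 0) = (x == 1) by rewrite subr_eq0 eq_sym.
have -> : (1 - x == 1) = (x == 0) by rewrite -subr_eq0 addrAC subrr add0r oppr_eq0.
by rewrite opprB.
Qed.

Lemma delta01_eq1 x : (delta01 x == 1) = (x == 0).
Proof.
rewrite /delta01; have [->|_] := eqVneq x 0; first by rewrite (negbTE F01) subr0 eqxx.
by case: (x == 1); apply/negbTE/eqP => /=; lra.
Qed.

Lemma delta01_eqN1 x : (delta01 x == -1) = (x == 1).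
Proof.
rewrite /delta01; have [->|_] := eqVneq x 1; first by apply/eqP; rewrite oner_eq0 /=; lra.
by case: (x == 0); apply/negbTE/eqP => /=; lra.
Qed.

Lemma norm_delta01_le1 x : `|delta01 x| <= 1.
Proof.
by rewrite ler_norml /delta01; case: (_ == 0); case: (_ == 1) => /=; apply/andP; split; lra.
Qed.

Lemma is_prob_mass e : `|e| <= 1 -> is_prob (mass e).
Proof.
move=> e_le1; split=> [x|].
  have : `|e * delta01 x| <= 1 by rewrite normrM mulr_ile1 ?norm_delta01_le1.
  by rewrite ler_norml => /andP[ge_N1 _]; rewrite /mass divr_ge0 ?ler0n //; lra.
rewrite -mulr_suml big_split /= -mulr_sumr sum_delta01 mulr0 addr0.
by rewrite sumr_const card_Fp // mulfV.
Qed.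

Lemma mass_reflect e x : mass e (1 - x) = mass (- e) x.
Proof. by rewrite /mass delta01_reflect mulrN mulNr. Qed.

Lemma eq_mass e x x' : e != 0 -> (mass e x == mass e x') = (delta01 x == delta01 x').
Proof.
move=> e_neq0; rewrite /mass (inj_eq (mulIf (invr_neq0 natr_p_neq0))).
by rewrite (inj_eq (addrI 1)) (inj_eq (mulfI e_neq0)).
Qed.

Lemma charfun_mass e y :
  charfun (mass e) (fun x => x) y = if y == 0 then 1 else (e / p%:R)%:C * (1 - zchar R 1 y).
Proof.
rewrite /charfun.
transitivity (\sum_x (p%:R^-1)%:C * (zchar R x y + e%:C * ((delta01 x)%:C * zchar R x y))).
  by apply: eq_bigr => x _; rewrite /mass !rmorphM rmorphD rmorph1 /=; ring.
rewrite -mulr_sumr big_split -mulr_sumr /= (sum_delta01_mul (real_complex R)).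
rewrite sum_zchar // zchar0; have [->|_] := eqVneq y 0.
  rewrite zcharE /= muln0 zeta0 subrr mulr0 addr0 -(rmorph_nat (real_complex R)) -rmorphM mulVf // rmorph1.
by rewrite rmorphM /=; ring.
Qed.

Lemma law_mass_reflect e a : law (mass e) (fun x => 1 - x) a = mass (- e) a.
Proof. by rewrite (law_can _ _ _ (subKr 1) (subKr 1)) /law prob_pred1 mass_reflect. Qed.

Lemma law_mass_shift e alpha a : law (mass e) (fun x => x + alpha) a = mass e (a - alpha).
Proof. by rewrite (law_can _ _ _ (addrK alpha) (subrK alpha)) /law prob_pred1. Qed.

Lemma charfun_nonvanishing_mass e : e != 0 -> charfun_nonvanishing (mass e) (fun x => x).
Proof.
move=> e_neq0 y; rewrite charfun_mass; have [_|y_neq0] := eqVneq y 0; first exact: oner_neq0.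
rewrite mulf_eq0 negb_or subr_eq0 [1 == _]eq_sym zchar1_neq1 // andbT.
by rewrite (inj_eq (@complexI R)) mulf_neq0 ?invr_neq0.
Qed.

Lemma charfun_nonvanishing_mass_reflect e :
  e != 0 -> charfun_nonvanishing (mass e) (fun x => 1 - x).
Proof.
move=> e_neq0 y; rewrite (eq_charfun (P2 := mass (- e)) (X2 := fun x => x)).
  by apply: charfun_nonvanishing_mass; rewrite oppr_eq0.
by move=> a; rewrite law_mass_reflect /law prob_pred1.
Qed.

Lemma mass_opp_not_shift (alpha : 'F_p) : p != 2%N ->
  exists a, mass (-1) a != mass 1 (a - alpha).
Proof.
move=> p_neq2; suff [a delta_neq] : exists a, delta01 (1 - a) != delta01 (a - alpha).
  by exists a; rewrite -mass_reflect eq_mass ?oner_neq0.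
have [->|alpha_neq1] := eqVneq alpha 1.
  exists 0; rewrite subr0 sub0r; apply: contra (Fp_oppr1_neq1 p_neq2).
  by move/eqP=> delta_eq; rewrite -delta01_eqN1 -delta_eq delta01_eqN1.
exists 1; rewrite subrr; apply: contra alpha_neq1.
by move/eqP=> delta_eq; rewrite eq_sym -subr_eq0 -delta01_eq1 -delta_eq delta01_eq1.
Qed.

Lemma prob_line_reflect (c : 'F_p) (E : pred 'F_p) : c != 0 ->
  prob (prod_mass (mass 1) (mass 1)) (fun w => E (w.1 + c * w.2))
  = prob (prod_mass (mass 1) (mass 1)) (fun w => E ((1 - w.1) + c * (1 - w.2))).
Proof.
move=> c_neq0; pose r (w : 'F_p * 'F_p) := (1 - w.1, 1 - w.2).
have rK : involutive r by move=> w; rewrite /r /= !subKr -surjective_pairing.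
rewrite /prob [RHS](reindex_inj (inv_inj rK)) /=.
under [RHS]eq_bigl do rewrite !subKr.
apply/eqP; rewrite -subr_eq0 -sumrB.
under eq_bigr do rewrite /prod_mass /= !mass_reflect.
rewrite (eq_bigr (fun w => 2 / p%:R ^+ 2 * (delta01 w.1 + delta01 w.2))) => [|w _]; last first.
  by rewrite /mass; field.
have fiber1 : \sum_(w | E (w.1 + c * w.2)) delta01 w.1 = 0.
  apply: (@sum_fiber_eq0 _ _ _ E (fun x y => x + c * y) _ sum_delta01).
  by move=> x y y' /addrI /(mulfI c_neq0).
have fiber2 : \sum_(w | E (w.1 + c * w.2)) delta01 w.2 = 0.
  rewrite (reindex_inj (can_inj (@swap_pairK 'F_p 'F_p))) /=.
  by apply: (@sum_fiber_eq0 _ _ _ E (fun x y => y + c * x) _ sum_delta01) => x; apply: addIr.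
by rewrite -mulr_sumr big_split /= fiber1 fiber2 addr0 mulr0.
Qed.

Lemma prob_linear_pair_reflect (a2 a3 b2 b3 u v : 'F_p) :
    a2 != 0 -> a3 != 0 -> a2 * b3 = a3 * b2 ->
  prob (prod_mass (mass 1) (mass 1))
    (fun w => (a2 * w.1 + a3 * w.2 == u) && (b2 * w.1 + b3 * w.2 == v))
  = prob (prod_mass (mass 1) (mass 1))
    (fun w => (a2 * (1 - w.1) + a3 * (1 - w.2) == u)
              && (b2 * (1 - w.1) + b3 * (1 - w.2) == v)).
Proof.
move=> a2_neq0 a3_neq0 a2b3E; pose E s := (a2 * s == u) && (b2 * s == v).
have factor x y : (a2 * x + a3 * y == u) && (b2 * x + b3 * y == v) = E (x + a3 / a2 * y).
  have a_factor : a2 * x + a3 * y = a2 * (x + a3 / a2 * y) by field.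
  have b_factor : b2 * x + b3 * y = b2 * (x + a3 / a2 * y).
    by apply: (mulfI a2_neq0); rewrite mulrDr [a2 * (b3 * y)]mulrA a2b3E; field.
  by rewrite a_factor b_factor.
rewrite (@eq_prob _ _ _ _ (fun w => E (w.1 + a3 / a2 * w.2))) => [|w]; last exact: factor.
rewrite [RHS](@eq_prob _ _ _ _ (fun w => E ((1 - w.1) + a3 / a2 * (1 - w.2)))) => [|w].
  by apply: prob_line_reflect; rewrite mulf_neq0 ?invr_neq0.
exact: factor.
Qed.

End Fp.

Theorem proposition4p2 (R : realType) (p : nat) (hp : prime p) (hp2 : p != 2%N)
  (a2 a3 b2 b3 : 'F_p) (ha2 : a2 != 0) (ha3 : a3 != 0) (hb2 : b2 != 0) (hb3 : b3 != 0)
  (hab : a2 * b3 = a3 * b2) :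
  exists (Omega : finType) (P : Omega -> R)
         (xi1 xi2 xi3 xi4 eta1 eta2 eta3 eta4 : Omega -> 'F_p),
    [/\ is_prob P /\ indep4 P xi1 xi2 xi3 xi4 /\ indep4 P eta1 eta2 eta3 eta4,
        [/\ charfun_nonvanishing P xi1, charfun_nonvanishing P xi2,
            charfun_nonvanishing P xi3 & charfun_nonvanishing P xi4]
        /\ [/\ charfun_nonvanishing P eta1, charfun_nonvanishing P eta2,
            charfun_nonvanishing P eta3 & charfun_nonvanishing P eta4],
        (forall a, law P xi2 a = law P xi3 a) /\ (forall a, law P eta2 a = law P eta3 a),
        (forall u v : 'F_p,
           prob P (fun w => (xi1 w + a2 * xi2 w + a3 * xi3 w == u)
                            && (b2 * xi2 w + b3 * xi3 w + xi4 w == v))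
           = prob P (fun w => (eta1 w + a2 * eta2 w + a3 * eta3 w == u)
                              && (b2 * eta2 w + b3 * eta3 w + eta4 w == v)))
      & forall alpha : 'F_p,
          exists a, law P eta2 a <> law P (fun w => xi2 w + alpha) a].
Proof.
have mu_prob : is_prob (mass 1 : 'F_p -> R) by apply: is_prob_mass; rewrite ?normr1.
pose P := prod_mass (mass 1 : 'F_p -> R) (mass 1 : 'F_p -> R).
have P_prob : is_prob P := is_prob_prod mu_prob mu_prob.
have nv_id := charfun_nonvanishing_mass hp (oner_neq0 R).
have nv_reflect := charfun_nonvanishing_mass_reflect hp (oner_neq0 R).
have nv0 : charfun_nonvanishing P (fun _ => 0 : 'F_p) by move=> y; rewrite charfun_cst0 ?oner_neq0.
exists _, P, (fun _ => 0), (fun w => w.1), (fun w => w.2), (fun _ => 0).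
exists (fun _ => 0), (fun w => 1 - w.1), (fun w => 1 - w.2), (fun _ => 0).
split.
- split=> //; split.
  + exact: (indep4_prod mu_prob mu_prob 0 0 (fun x => x) (fun x => x)).
  + exact: (indep4_prod mu_prob mu_prob 0 0 (fun x => 1 - x) (fun x => 1 - x)).
- split; split=> //.
  + exact: (charfun_nonvanishing_fst mu_prob nv_id).
  + exact: (charfun_nonvanishing_snd mu_prob nv_id).
  + exact: (charfun_nonvanishing_fst mu_prob nv_reflect).
  + exact: (charfun_nonvanishing_snd mu_prob nv_reflect).
- split=> a; first by rewrite (law_fst _ mu_prob (fun x => x)) (law_snd _ mu_prob (fun x => x)).
  by rewrite (law_fst _ mu_prob (fun x => 1 - x)) (law_snd _ mu_prob (fun x => 1 - x)).
- move=> u v; rewrite /prob.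
  under eq_bigl do rewrite add0r addr0; under [RHS]eq_bigl do rewrite add0r addr0.
  exact: prob_linear_pair_reflect.
- move=> alpha; have [a neq_a] := mass_opp_not_shift R hp alpha hp2.
  exists a; rewrite (law_fst _ mu_prob (fun x => 1 - x)) (law_fst _ mu_prob (fun x => x + alpha)).
  by rewrite law_mass_reflect law_mass_shift; apply/eqP.
Qed.
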